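(* Let $\mathbb D=\{z\in\mathbb C:|z|<1\}$ and let $\mathcal P$ be the set of holomorphic functions $p$ on $\mathbb D$ with $\operatorname{Re} p(z)>0$ for all $z\in\mathbb D$ (no normalization $p(0)=1$ is imposed). For $p\in\mathcal P$ and $0<r<1$ set \[ I_p(r):=\int_0^{2\pi}\left|\frac{z p'(z)}{p(z)}\right|^2\,d\theta,\qquad z=re^{i\theta}. \] Then there exists a function $p_*\in\mathcal P$ such that for every real $\beta<2$, $I_{p_*}(r)\neq O\bigl((1-r)^{-\beta}\bigr)$ as $r\to1^-$.
   Context: $A(r)\ne O(B(r))$ as $r\to1^-$ means there is no constant $C$ with $A(r)\le C B(r)$ for all $r$ sufficiently close to $1$. *)

From Stdlib Require Import Reals.
From Coquelicot Require Import Coquelicot.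
Open Scope R_scope.

Definition in_disc (z : C) : Prop := Cmod z < 1.

Definition holo_on_disc_with (p dp : C -> C) : Prop :=
  forall z : C, in_disc z -> @is_derive C_AbsRing C_NormedModule p z (dp z).

Definition in_class_P (p : C -> C) : Prop :=
  (exists dp : C -> C, holo_on_disc_with p dp) /\
  (forall z : C, in_disc z -> 0 < Re (p z)).

Definition polar (r theta : R) : C := (r * cos theta, r * sin theta)%R.

Definition I_int (p dp : C -> C) (r : R) : R :=
  RInt (fun theta : R =>
          (Cmod (Cdiv (Cmult (polar r theta) (dp (polar r theta))) (p (polar r theta)))) ^ 2)
       0 (2 * PI).

Definition bigO_at_1minus (A B : R -> R) : Prop :=
  exists K : R, exists r0 : R, r0 < 1 /\
    forall r : R, r0 < r < 1 -> A r <= K * B r.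

(* The witness is p = 1 + h with the gap series h(z) = sum_k c_k z^(N_k), c_k = 2^-(k^2+2),
   N_k = 2^(k^3+1).  The coefficients sum to at most 1/2, so Re p >= 1/2 and |p| <= 3/2.
   On the circle |z| = r_j = 1 - 1/(2 N_j) the j-th term of z p'(z) = sum_k c_k N_k z^(N_k) has
   modulus at least c_j N_j / 2, while all other terms together contribute at most c_j N_j / 4:
   the earlier ones because c_k N_k grows super-exponentially, the later ones because
   n r^n <= 1/(1 - r) = 2 N_j while c_k is far smaller than c_j.  Hence |z p'/p| >= c_j N_j / 8
   on that circle, so I_p(r_j) >= 2^(2(j^3 - j^2 - 4)), whereas (1 - r_j)^(-beta) =
   2^(beta (j^3 + 2)); for beta < 2 the cubic exponent wins.  Holomorphy of a gap series follows
   by termwise differentiation, controlled by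
   |z^n - w^n - n w^(n-1) (z - w)| <= n^2 rho^(n-2) |z - w|^2 for |z|, |w| <= rho. *)

From Stdlib Require Import Reals Lra Lia.
From Coquelicot Require Import Coquelicot.
Open Scope R_scope.

Lemma bernoulli_ineq (x : R) (n : nat) : -1 <= x -> 1 + INR n * x <= (1 + x) ^ n.
Proof.
  intro Hx; induction n as [|n IH]; [simpl; lra|].
  rewrite S_INR; simpl pow.
  assert (0 <= INR n * x * x) by (pose proof (pos_INR n); nra).
  nra.
Qed.

Lemma mul_pow_le (t : R) (n : nat) : 0 <= t <= 1 -> INR n * t ^ n * (1 - t) <= 1 - t ^ n.
Proof.
  intro Ht; induction n as [|n IH]; [simpl; lra|].
  rewrite S_INR; simpl pow.
  assert (0 <= t ^ n) by (apply pow_le; lra).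
  assert (t ^ n <= 1) by (rewrite <- (pow1 n); apply pow_incr; lra).
  assert (t * (INR n * t ^ n * (1 - t)) <= t * (1 - t ^ n)) by (apply Rmult_le_compat_l; lra).
  assert (0 <= (1 - t) * (1 - t * t ^ n)) by (apply Rmult_le_pos; nra).
  nra.
Qed.

Lemma mul_pow_bound (t : R) (n : nat) : 0 <= t < 1 -> INR n * t ^ n <= / (1 - t).
Proof.
  intro Ht.
  apply Rmult_le_reg_r with (1 - t); [lra|].
  rewrite Rinv_l by lra.
  pose proof (mul_pow_le t n ltac:(lra)); pose proof (pow_le t n ltac:(lra)); lra.
Qed.

Lemma sqr_mul_pow_bounded (t : R) : 0 <= t < 1 -> exists C, forall n, INR n ^ 2 * t ^ n <= C.
Proof.
  intro Ht.
  set (s := sqrt t).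
  assert (Hs : 0 <= s < 1).
  { split; [apply sqrt_pos|]. rewrite <- sqrt_1. apply sqrt_lt_1_alt; lra. }
  exists ((/ (1 - s)) ^ 2); intro n.
  replace (t ^ n) with ((s ^ n) ^ 2)
    by (rewrite <- pow_mult, Nat.mul_comm, pow_mult; unfold s; rewrite pow2_sqrt; lra).
  rewrite <- Rpow_mult_distr.
  apply pow_incr; split.
  - apply Rmult_le_pos; [apply pos_INR | apply pow_le; lra].
  - now apply mul_pow_bound.
Qed.

Lemma Cmod_pow_n (z : C) (n : nat) : Cmod (pow_n z n) = Cmod z ^ n.
Proof.
  induction n as [|n IH]; simpl; [apply Cmod_1|].
  change (Cmod (z * pow_n z n)%C = Cmod z * Cmod z ^ n).
  now rewrite Cmod_mult, IH.
Qed.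

Lemma pow_n_O (z : C) : pow_n z 0 = RtoC 1.
Proof. reflexivity. Qed.

Lemma pow_n_S (z : C) (n : nat) : pow_n z (S n) = (z * pow_n z n)%C.
Proof. reflexivity. Qed.

Lemma pow_n_sub_linear_SS (z w : C) (n : nat) :
  (pow_n z (S (S n)) - pow_n w (S (S n)) - INR (S (S n)) * pow_n w (S n) * (z - w))%C
  = (z * (pow_n z (S n) - pow_n w (S n) - INR (S n) * pow_n w n * (z - w))
     + INR (S n) * pow_n w n * ((z - w) * (z - w)))%C.
Proof. rewrite !pow_n_S, (S_INR (S n)), RtoC_plus; ring. Qed.

(* The factor rho ^ 2 on the left replaces the exponent n - 2, which is truncated for n < 2. *)
Lemma pow_n_sub_linear_bound (z w : C) (rho : R) (n : nat) :
  Cmod z <= rho -> Cmod w <= rho ->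
  rho ^ 2 * Cmod (pow_n z n - pow_n w n - INR n * pow_n w (pred n) * (z - w))
    <= INR n ^ 2 * rho ^ n * Cmod (z - w) ^ 2.
Proof.
  intros Hz Hw.
  assert (Hrho : 0 <= rho) by (pose proof (Cmod_ge_0 z); lra).
  assert (Hd : 0 <= Cmod (z - w)) by apply Cmod_ge_0.
  destruct n as [|n].
  { rewrite !pow_n_O; simpl INR; simpl pred.
    replace (1 - 1 - 0 * 1 * (z - w))%C with (RtoC 0) by ring.
    rewrite Cmod_0. lra. }
  induction n as [|n IH].
  { rewrite !pow_n_S, !pow_n_O; simpl pred; simpl INR.
    replace (z * 1 - w * 1 - 1 * 1 * (z - w))%C with (RtoC 0) by ring.
    rewrite Cmod_0. nra. }
  simpl pred in *; rewrite pow_n_sub_linear_SS.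
  set (D := (pow_n z (S n) - pow_n w (S n) - INR (S n) * pow_n w n * (z - w))%C) in *.
  pose proof (Cmod_triangle (z * D) (INR (S n) * pow_n w n * ((z - w) * (z - w)))) as Htri.
  rewrite !Cmod_mult, Cmod_R, Rabs_pos_eq in Htri by apply pos_INR.
  assert (HwN : Cmod (pow_n w n) <= rho ^ n)
    by (rewrite Cmod_pow_n; apply pow_incr; split; [apply Cmod_ge_0 | exact Hw]).
  rewrite (S_INR (S n)).
  change (rho ^ S (S n)) with (rho * (rho * rho ^ n)).
  change (rho ^ S n) with (rho * rho ^ n) in IH.
  set (a := INR (S n)) in *; set (d := Cmod (z - w)) in *; set (q := rho ^ n) in *.
  assert (0 <= a) by apply pos_INR.
  assert (0 <= q) by (apply pow_le; lra).
  pose proof (Cmod_ge_0 z); pose proof (Cmod_ge_0 D); pose proof (Cmod_ge_0 (pow_n w n)).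
  assert (HzD : rho ^ 2 * (Cmod z * Cmod D) <= rho * (a ^ 2 * (rho * q) * d ^ 2)).
  { replace (rho ^ 2 * (Cmod z * Cmod D)) with (Cmod z * (rho ^ 2 * Cmod D)) by ring.
    apply Rmult_le_compat; auto. apply Rmult_le_pos; [apply pow2_ge_0 | lra]. }
  assert (Hlin : a * (rho ^ 2 * Cmod (pow_n w n)) * d ^ 2 <= a * (rho ^ 2 * q) * d ^ 2).
  { apply Rmult_le_compat_r; [apply pow2_ge_0|].
    apply Rmult_le_compat_l; [lra|]. apply Rmult_le_compat_l; [apply pow2_ge_0 | exact HwN]. }
  assert (0 <= rho ^ 2 * q * d ^ 2)
    by (apply Rmult_le_pos; [apply Rmult_le_pos|]; try apply pow2_ge_0; lra).
  apply Rmult_le_compat_l with (r := rho ^ 2) in Htri; [|apply pow2_ge_0].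
  nra.
Qed.

Definition Csum (u : nat -> C) : C :=
  iota (fun l : C_CompleteNormedModule => is_series u l).

Lemma Csum_correct (u : nat -> C) (l : C) : is_series u l -> Csum u = l.
Proof.
  apply (iota_filterlim_locally (K := C_AbsRing) (V := C_CompleteNormedModule)
           (F := eventually) (sum_n u)).
Qed.

Lemma is_series_Csum_dominated (u : nat -> C) (b : nat -> R) :
  (forall k, Cmod (u k) <= b k) -> ex_series b -> is_series u (Csum u).
Proof.
  intros Hub Hb.
  destruct (ex_series_le (K := C_AbsRing) (V := C_CompleteNormedModule) u b Hub Hb) as [l Hl].
  now rewrite (Csum_correct u l Hl).
Qed.

Lemma sum_n_Cmod_le (u : nat -> C) (b : nat -> R) (N : nat) :
  (forall k, Cmod (u k) <= b k) -> Cmod (sum_n u N) <= sum_n b N.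
Proof.
  intro Hub; induction N as [|N IH].
  - rewrite !sum_O; apply Hub.
  - rewrite !sum_Sn.
    eapply Rle_trans; [apply Cmod_triangle|].
    change (plus (sum_n b N) (b (S N))) with (sum_n b N + b (S N)).
    pose proof (Hub (S N)); lra.
Qed.

Lemma is_series_Cmod_le (u : nat -> C) (b : nat -> R) (l : C) (L : R) :
  is_series u l -> is_series b L -> (forall k, Cmod (u k) <= b k) -> Cmod l <= L.
Proof.
  intros Hu Hb Hub.
  apply (is_lim_seq_le (fun N => Cmod (sum_n u N)) (sum_n b) (Cmod l) L).
  - intro N; now apply sum_n_Cmod_le.
  - apply (filterlim_comp _ _ _ (sum_n u) Cmod eventually (locally l)); [exact Hu|].
    apply (filterlim_norm (K := C_AbsRing) (V := C_NormedModule)).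
  - exact Hb.
Qed.

Lemma sum_n_single (v : C) (j N : nat) :
  sum_n (fun k => if Nat.eqb k j then v else RtoC 0) N = if Nat.leb j N then v else RtoC 0.
Proof.
  induction N as [|N IH].
  - rewrite sum_O; now destruct j.
  - rewrite sum_Sn, IH.
    destruct (Nat.eqb_spec (S N) j); destruct (Nat.leb_spec j N);
      destruct (Nat.leb_spec j (S N)); try lia.
    + apply (plus_zero_l (G := C_AbelianMonoid)).
    + apply (plus_zero_r (G := C_AbelianMonoid)).
    + apply (plus_zero_r (G := C_AbelianMonoid)).
Qed.

Lemma is_series_single (v : C) (j : nat) :
  is_series (fun k => if Nat.eqb k j then v else RtoC 0) v.
Proof.
  apply (filterlim_ext_loc (fun _ => v)); [|apply filterlim_const].
  exists j; intros N HN.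
  rewrite sum_n_single; apply Nat.leb_le in HN; now rewrite HN.
Qed.

Lemma is_series_Cmod_ge_dominant (u : nat -> C) (b : nat -> R) (l : C) (L : R) (j : nat) :
  is_series u l -> is_series b L -> 0 <= b j ->
  (forall k, k <> j -> Cmod (u k) <= b k) -> Cmod (u j) - L <= Cmod l.
Proof.
  intros Hu Hb Hbj Hub.
  assert (Hrest : Cmod (l - u j) <= L).
  { apply (is_series_Cmod_le (fun k => u k - if Nat.eqb k j then u j else RtoC 0)%C b _ L);
      [|exact Hb|].
    - apply (is_series_minus (K := C_AbsRing) (V := C_NormedModule)); [exact Hu|].
      apply is_series_single.
    - intro k; destruct (Nat.eqb_spec k j) as [->|Hk].
      + replace (u j - u j)%C with (RtoC 0) by ring. now rewrite Cmod_0.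
      + replace (u k - 0)%C with (u k) by ring. now apply Hub. }
  pose proof (Cmod_triangle l (u j - l)) as Htri.
  replace (l + (u j - l))%C with (u j) in Htri by ring.
  rewrite <- (Cmod_opp (u j - l)) in Htri.
  replace (- (u j - l))%C with (l - u j)%C in Htri by ring.
  lra.
Qed.

Definition gap_series (c : nat -> C) (m : nat -> nat) (z : C) : C :=
  Csum (fun k => c k * pow_n z (m k))%C.

(* For m k = 0 the junk exponent pred 0 = 0 is harmless: the coefficient is multiplied by 0. *)
Definition gap_series_deriv (c : nat -> C) (m : nat -> nat) : C -> C :=
  gap_series (fun k => c k * INR (m k))%C (fun k => pred (m k)).

Definition gap_summable_on_disc (c : nat -> C) (m : nat -> nat) : Prop :=
  forall rho, 0 <= rho < 1 -> ex_series (fun k => Cmod (c k) * rho ^ m k).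

Lemma is_series_gap_series (c : nat -> C) (m : nat -> nat) (z : C) :
  gap_summable_on_disc c m -> Cmod z < 1 ->
  is_series (fun k => c k * pow_n z (m k))%C (gap_series c m z).
Proof.
  intros Hc Hz.
  apply (is_series_Csum_dominated _ (fun k => Cmod (c k) * Cmod z ^ m k)).
  - intro k; rewrite Cmod_mult, Cmod_pow_n; lra.
  - apply Hc; split; [apply Cmod_ge_0 | exact Hz].
Qed.

Lemma mul_pow_pred_le (sigma : R) (n : nat) :
  1 / 2 <= sigma -> INR n * sigma ^ pred n <= 2 * (INR n ^ 2 * sigma ^ n).
Proof.
  intro Hs; destruct n as [|n]; [simpl; lra|].
  simpl pred; change (sigma ^ S n) with (sigma * sigma ^ n).
  set (N := INR (S n)); set (q := sigma ^ n).
  assert (1 <= N) by (unfold N; rewrite S_INR; pose proof (pos_INR n); lra).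
  assert (0 <= q) by (apply pow_le; lra).
  assert (N * q <= N ^ 2 * q) by (apply Rmult_le_compat_r; [lra | nra]).
  assert (0 <= N ^ 2 * q) by (apply Rmult_le_pos; [apply pow2_ge_0 | lra]).
  nra.
Qed.

Section GapSeries.

Variables (c : nat -> C) (m : nat -> nat).
Hypothesis c_summable : gap_summable_on_disc c m.

Lemma gap_summable_sqr_weight (rho : R) : 0 <= rho < 1 ->
  ex_series (fun k => Cmod (c k) * INR (m k) ^ 2 * rho ^ m k).
Proof.
  intro Hrho.
  set (sigma := (1 + rho) / 2).
  assert (Hsigma : 0 < sigma < 1) by (unfold sigma; lra).
  destruct (sqr_mul_pow_bounded (rho / sigma)) as [K HK].
  { split; [apply Rdiv_le_0_compat; lra|].
    apply Rmult_lt_reg_r with sigma; [lra|].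
    unfold Rdiv; rewrite Rmult_assoc, Rinv_l, Rmult_1_r, Rmult_1_l by lra.
    unfold sigma; lra. }
  apply (ex_series_le (K := R_AbsRing) (V := R_CompleteNormedModule) _
           (fun k => K * (Cmod (c k) * sigma ^ m k))).
  - intro k.
    change (norm ?x) with (Rabs x).
    assert (Hw : INR (m k) ^ 2 * rho ^ m k <= K * sigma ^ m k).
    { replace (rho ^ m k) with ((rho / sigma) ^ m k * sigma ^ m k)
        by (rewrite <- Rpow_mult_distr; f_equal; field; lra).
      rewrite <- Rmult_assoc.
      apply Rmult_le_compat_r; [apply pow_le; lra | apply HK]. }
    rewrite Rabs_pos_eq.
    + pose proof (Cmod_ge_0 (c k)).
      replace (Cmod (c k) * INR (m k) ^ 2 * rho ^ m k)
        with (Cmod (c k) * (INR (m k) ^ 2 * rho ^ m k)) by ring.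
      replace (K * (Cmod (c k) * sigma ^ m k)) with (Cmod (c k) * (K * sigma ^ m k)) by ring.
      now apply Rmult_le_compat_l.
    + apply Rmult_le_pos; [apply Rmult_le_pos; [apply Cmod_ge_0 | apply pow2_ge_0]|].
      apply pow_le; lra.
  - apply (ex_series_scal_l (K := R_AbsRing) (V := R_NormedModule)).
    apply c_summable; lra.
Qed.

Lemma gap_summable_deriv : gap_summable_on_disc (fun k => c k * INR (m k))%C (fun k => pred (m k)).
Proof.
  intros rho Hrho.
  set (sigma := Rmax (1 / 2) rho).
  assert (Hsigma : 1 / 2 <= sigma < 1) by (split; [apply Rmax_l | apply Rmax_lub_lt; lra]).
  apply (ex_series_le (K := R_AbsRing) (V := R_CompleteNormedModule) _
           (fun k => 2 * (Cmod (c k) * INR (m k) ^ 2 * sigma ^ m k))).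
  - intro k.
    change (norm ?x) with (Rabs x).
    rewrite Cmod_mult, Cmod_R, (Rabs_pos_eq (INR (m k))) by apply pos_INR.
    assert (Hpow : rho ^ pred (m k) <= sigma ^ pred (m k))
      by (apply pow_incr; split; [lra | apply Rmax_r]).
    pose proof (mul_pow_pred_le sigma (m k) (proj1 Hsigma)) as Hmp.
    pose proof (pos_INR (m k)); pose proof (Cmod_ge_0 (c k)).
    assert (0 <= rho ^ pred (m k)) by (apply pow_le; lra).
    rewrite Rabs_pos_eq by (apply Rmult_le_pos; [apply Rmult_le_pos|]; assumption).
    assert (INR (m k) * rho ^ pred (m k) <= 2 * (INR (m k) ^ 2 * sigma ^ m k)).
    { eapply Rle_trans; [|exact Hmp]. now apply Rmult_le_compat_l. }
    replace (2 * (Cmod (c k) * INR (m k) ^ 2 * sigma ^ m k))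
      with (Cmod (c k) * (2 * (INR (m k) ^ 2 * sigma ^ m k))) by ring.
    rewrite Rmult_assoc; now apply Rmult_le_compat_l.
  - apply (ex_series_scal_l (K := R_AbsRing) (V := R_NormedModule)).
    apply gap_summable_sqr_weight; lra.
Qed.

Lemma gap_series_remainder_le (y z : C) (rho S : R) :
  1 / 2 <= rho < 1 -> Cmod y <= rho -> Cmod z <= rho ->
  is_series (fun k => Cmod (c k) * INR (m k) ^ 2 * rho ^ m k) S ->
  Cmod (gap_series c m y - gap_series c m z - (y - z) * gap_series_deriv c m z)
    <= 4 * S * Cmod (y - z) ^ 2.
Proof.
  intros Hrho Hy Hz HS.
  assert (Hsum : is_series
                   (fun k => c k * pow_n y (m k) - c k * pow_n z (m k)
                             - (y - z) * (c k * INR (m k) * pow_n z (pred (m k))))%C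
                   (gap_series c m y - gap_series c m z - (y - z) * gap_series_deriv c m z)%C).
  { apply (is_series_minus (K := C_AbsRing) (V := C_NormedModule)).
    - apply (is_series_minus (K := C_AbsRing) (V := C_NormedModule));
        apply is_series_gap_series; auto; lra.
    - apply (is_series_scal_l (K := C_AbsRing) (V := C_NormedModule)).
      apply is_series_gap_series; [apply gap_summable_deriv | lra]. }
  replace (4 * S * Cmod (y - z) ^ 2) with (4 * Cmod (y - z) ^ 2 * S) by ring.
  apply (is_series_Cmod_le _ _ _ _ Hsum
           (is_series_scal_l (K := R_AbsRing) (V := R_NormedModule) (4 * Cmod (y - z) ^ 2) _ _ HS)).
  intro k.
  replace (c k * pow_n y (m k) - c k * pow_n z (m k)
           - (y - z) * (c k * INR (m k) * pow_n z (pred (m k))))%C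
    with (c k * (pow_n y (m k) - pow_n z (m k) - INR (m k) * pow_n z (pred (m k)) * (y - z)))%C
    by ring.
  rewrite Cmod_mult.
  change (scal ?a ?b) with (a * b).
  replace (4 * Cmod (y - z) ^ 2 * (Cmod (c k) * INR (m k) ^ 2 * rho ^ m k))
    with (Cmod (c k) * (4 * (INR (m k) ^ 2 * rho ^ m k * Cmod (y - z) ^ 2))) by ring.
  apply Rmult_le_compat_l; [apply Cmod_ge_0|].
  apply Rmult_le_reg_l with (rho ^ 2); [nra|].
  eapply Rle_trans; [exact (pow_n_sub_linear_bound y z rho (m k) Hy Hz)|].
  assert (0 <= INR (m k) ^ 2 * rho ^ m k * Cmod (y - z) ^ 2)
    by (apply Rmult_le_pos; [apply Rmult_le_pos|]; try apply pow2_ge_0; apply pow_le; lra).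
  assert (0 <= (4 * rho ^ 2 - 1) * (INR (m k) ^ 2 * rho ^ m k * Cmod (y - z) ^ 2))
    by (apply Rmult_le_pos; nra).
  nra.
Qed.

Lemma is_derive_gap_series (z : C) : Cmod z < 1 ->
  @is_derive C_AbsRing C_NormedModule (gap_series c m) z (gap_series_deriv c m z).
Proof.
  intro Hz; split; [apply is_linear_scal_l|].
  intros x Hx.
  pose proof (is_filter_lim_locally_unique
                (K := C_AbsRing) (V := AbsRing_NormedModule C_AbsRing) z x Hx); subst x.
  intro eps.
  set (rho := (1 + Cmod z) / 2).
  pose proof (Cmod_ge_0 z).
  destruct (gap_summable_sqr_weight rho ltac:(unfold rho; lra)) as [S HS].
  pose proof (Rle_abs S); pose proof (Rabs_pos S).
  assert (Hdelta : 0 < Rmin ((1 - Cmod z) / 2) (eps / (4 * Rabs S + 1))).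
  { apply Rmin_glb_lt; [lra|]. apply Rdiv_lt_0_compat; [apply cond_pos | lra]. }
  eapply filter_imp; [|apply (locally_ball_norm (K := C_AbsRing)
                          (V := AbsRing_NormedModule C_AbsRing) z (mkposreal _ Hdelta))].
  intros y Hy; unfold ball_norm in Hy; simpl in Hy.
  change (Cmod (y - z) < Rmin ((1 - Cmod z) / 2) (eps / (4 * Rabs S + 1))) in Hy.
  change (Cmod (gap_series c m y - gap_series c m z - (y - z) * gap_series_deriv c m z)
            <= eps * Cmod (y - z)).
  assert (Hyz1 : Cmod (y - z) < (1 - Cmod z) / 2)
    by (eapply Rlt_le_trans; [exact Hy | apply Rmin_l]).
  assert (Hyz2 : Cmod (y - z) * (4 * Rabs S + 1) <= eps).
  { apply Rle_div_r; [lra|]. apply Rlt_le; eapply Rlt_le_trans; [exact Hy | apply Rmin_r]. }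
  assert (Hyrho : Cmod y <= rho).
  { replace y with ((y - z) + z)%C by ring.
    eapply Rle_trans; [apply Cmod_triangle|]. unfold rho; lra. }
  eapply Rle_trans; [apply (gap_series_remainder_le y z rho S); auto; unfold rho; lra|].
  pose proof (Cmod_ge_0 (y - z)).
  nra.
Qed.

End GapSeries.

Lemma continuous_of_is_derive (f : C -> C) (z df : C) :
  @is_derive C_AbsRing C_NormedModule f z df -> continuous f z.
Proof.
  intros H P HP.
  apply locally_C.
  exact (ex_derive_continuous f z (ex_intro _ df H) P HP).
Qed.

Lemma continuous_gap_series_deriv (c : nat -> C) (m : nat -> nat) (z : C) :
  gap_summable_on_disc c m -> Cmod z < 1 -> continuous (gap_series_deriv c m) z.
Proof.
  intros Hc Hz.
  exact (continuous_of_is_derive _ _ _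
           (is_derive_gap_series _ _ (gap_summable_deriv c m Hc) z Hz)).
Qed.

Lemma is_series_mul_gap_series_deriv (c : nat -> C) (m : nat -> nat) (z : C) :
  gap_summable_on_disc c m -> Cmod z < 1 ->
  is_series (fun k => c k * INR (m k) * pow_n z (m k))%C (z * gap_series_deriv c m z)%C.
Proof.
  intros Hc Hz.
  eapply is_series_ext;
    [|exact (is_series_scal_l (K := C_AbsRing) (V := C_NormedModule) z _ _
               (is_series_gap_series _ _ z (gap_summable_deriv c m Hc) Hz))].
  intro k.
  change (z * (c k * INR (m k) * pow_n z (pred (m k)))
          = c k * INR (m k) * pow_n z (m k))%C.
  destruct (m k) as [|n]; simpl pred; [simpl INR; ring|].
  rewrite pow_n_S; ring.
Qed.

Lemma pow2_div_le (a b c d : nat) : (a + d <= c + b)%nat -> 2 ^ a / 2 ^ b <= 2 ^ c / 2 ^ d.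
Proof.
  intro H.
  assert (0 < 2 ^ b) by (apply pow_lt; lra); assert (0 < 2 ^ d) by (apply pow_lt; lra).
  apply Rmult_le_reg_r with (2 ^ b * 2 ^ d); [nra|].
  replace (2 ^ a / 2 ^ b * (2 ^ b * 2 ^ d)) with (2 ^ (a + d)) by (rewrite pow_add; field; lra).
  replace (2 ^ c / 2 ^ d * (2 ^ b * 2 ^ d)) with (2 ^ (c + b)) by (rewrite pow_add; field; lra).
  apply Rle_pow; [lra | exact H].
Qed.

Definition lacunary_coef (k : nat) : R := / 2 ^ (k * k + 2).

Definition lacunary_exp (k : nat) : nat := 2 ^ (k * k * k + 1).

Definition lacunary_h : C -> C := gap_series (fun k => RtoC (lacunary_coef k)) lacunary_exp.

Definition lacunary_p (z : C) : C := 1 + lacunary_h z.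

Definition lacunary_dp : C -> C := gap_series_deriv (fun k => RtoC (lacunary_coef k)) lacunary_exp.

Lemma lacunary_coef_pos (k : nat) : 0 < lacunary_coef k.
Proof. apply Rinv_0_lt_compat, pow_lt; lra. Qed.

Lemma lacunary_coef_le (k : nat) : lacunary_coef k <= / 4 * (1 / 2) ^ k.
Proof.
  unfold lacunary_coef.
  replace (1 / 2) with (/ 2) by field.
  rewrite pow_inv, <- Rinv_mult.
  apply Rinv_le_contravar; [apply Rmult_lt_0_compat; [lra | apply pow_lt; lra]|].
  replace (4 * 2 ^ k) with (2 ^ (k + 2)) by (rewrite pow_add; simpl; ring).
  apply Rle_pow; [lra | nia].
Qed.

Lemma INR_lacunary_exp (k : nat) : INR (lacunary_exp k) = 2 ^ (k * k * k + 1).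
Proof. unfold lacunary_exp; now rewrite pow_INR. Qed.

Lemma lacunary_exp_ge_2 (k : nat) : (2 <= lacunary_exp k)%nat.
Proof.
  unfold lacunary_exp; rewrite Nat.pow_add_r, Nat.pow_1_r.
  pose proof (Nat.pow_nonzero 2 (k * k * k) ltac:(lia)); lia.
Qed.

Lemma is_series_half_geom (a : R) : is_series (fun k => a * (1 / 2) ^ k) (a * 2).
Proof.
  apply (is_series_scal_l (K := R_AbsRing) (V := R_NormedModule)).
  replace 2 with (/ (1 - 1 / 2)) at 2 by field.
  apply is_series_geom; rewrite Rabs_pos_eq; lra.
Qed.

Lemma lacunary_summable : gap_summable_on_disc (fun k => RtoC (lacunary_coef k)) lacunary_exp.
Proof.
  intros rho Hrho.
  apply (ex_series_le (K := R_AbsRing) (V := R_CompleteNormedModule) _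
           (fun k => / 4 * (1 / 2) ^ k)); [|eexists; apply is_series_half_geom].
  intro k; change (norm ?x) with (Rabs x).
  pose proof (lacunary_coef_pos k); pose proof (lacunary_coef_le k).
  rewrite Cmod_R, (Rabs_pos_eq (lacunary_coef k)) by lra.
  assert (0 <= rho ^ lacunary_exp k <= 1)
    by (split; [apply pow_le | rewrite <- (pow1 (lacunary_exp k)); apply pow_incr]; lra).
  rewrite Rabs_pos_eq by nra.
  nra.
Qed.

Lemma Cmod_lacunary_h_le (z : C) : Cmod z < 1 -> Cmod (lacunary_h z) <= 1 / 2.
Proof.
  intro Hz.
  replace (1 / 2) with (/ 4 * 2) by field.
  apply (is_series_Cmod_le _ _ _ _ (is_series_gap_series _ _ z lacunary_summable Hz)
           (is_series_half_geom (/ 4))).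
  intro k; pose proof (lacunary_coef_pos k); pose proof (lacunary_coef_le k).
  rewrite Cmod_mult, Cmod_R, Cmod_pow_n, Rabs_pos_eq by lra.
  assert (0 <= Cmod z ^ lacunary_exp k <= 1).
  { split; [apply pow_le, Cmod_ge_0|].
    rewrite <- (pow1 (lacunary_exp k)); apply pow_incr; pose proof (Cmod_ge_0 z); lra. }
  nra.
Qed.

Lemma Re_lacunary_p_ge (z : C) : Cmod z < 1 -> 1 / 2 <= Re (lacunary_p z).
Proof.
  intro Hz.
  pose proof (Cmod_lacunary_h_le z Hz).
  pose proof (re_le_Cmod (lacunary_h z)) as Hre; apply Rabs_le_between in Hre.
  change (1 / 2 <= 1 + Re (lacunary_h z)); lra.
Qed.

Lemma Cmod_lacunary_p_le (z : C) : Cmod z < 1 -> Cmod (lacunary_p z) <= 3 / 2.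
Proof.
  intro Hz.
  eapply Rle_trans; [apply Cmod_triangle|].
  rewrite Cmod_1; pose proof (Cmod_lacunary_h_le z Hz); lra.
Qed.

Lemma is_derive_lacunary_p (z : C) : Cmod z < 1 ->
  @is_derive C_AbsRing C_NormedModule lacunary_p z (lacunary_dp z).
Proof.
  intro Hz.
  replace (lacunary_dp z) with (@plus C_NormedModule zero (lacunary_dp z))
    by apply (plus_zero_l (G := C_AbelianGroup)).
  apply (is_derive_plus (fun _ => RtoC 1) lacunary_h); [apply is_derive_const|].
  exact (is_derive_gap_series _ _ lacunary_summable z Hz).
Qed.

Definition lacunary_weight (k : nat) : R := lacunary_coef k * INR (lacunary_exp k).

Lemma lacunary_weight_eq (k : nat) : lacunary_weight k = 2 ^ (k * k * k + 1) / 2 ^ (k * k + 2).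
Proof. unfold lacunary_weight, lacunary_coef; rewrite INR_lacunary_exp; unfold Rdiv; ring. Qed.

Lemma lacunary_weight_pos (k : nat) : 0 < lacunary_weight k.
Proof. rewrite lacunary_weight_eq; apply Rdiv_lt_0_compat; apply pow_lt; lra. Qed.

Lemma lacunary_weight_tail_eq (j k : nat) :
  lacunary_weight j / 8 * (1 / 2) ^ k = 2 ^ (j * j * j + 1) / 2 ^ (j * j + 2 + 3 + k).
Proof.
  rewrite lacunary_weight_eq, !pow_add.
  replace (1 / 2) with (/ 2) by field; rewrite pow_inv.
  field; split; apply pow_nonzero; lra.
Qed.

Lemma lacunary_weight_le_before (j k : nat) : (4 <= j)%nat -> (k < j)%nat ->
  lacunary_weight k <= lacunary_weight j / 8 * (1 / 2) ^ k.
Proof.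
  intros Hj Hk; rewrite lacunary_weight_tail_eq, lacunary_weight_eq.
  apply pow2_div_le.
  assert (exists d, j = (k + 1 + d)%nat) as [d ->] by (exists (j - k - 1)%nat; lia).
  nia.
Qed.

Lemma lacunary_coef_le_after (j k : nat) : (4 <= j)%nat -> (j < k)%nat ->
  lacunary_coef k * (2 * INR (lacunary_exp j)) <= lacunary_weight j / 8 * (1 / 2) ^ k.
Proof.
  intros Hj Hk; rewrite lacunary_weight_tail_eq, INR_lacunary_exp.
  replace (lacunary_coef k * (2 * 2 ^ (j * j * j + 1)))
    with (2 ^ (1 + (j * j * j + 1)) / 2 ^ (k * k + 2))
    by (unfold lacunary_coef, Rdiv; rewrite pow_add; simpl; ring).
  apply pow2_div_le; nia.
Qed.

Definition lacunary_radius (j : nat) : R := 1 - / (2 * INR (lacunary_exp j)).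

Lemma lacunary_radius_bounds (j : nat) : 3 / 4 <= lacunary_radius j < 1.
Proof.
  unfold lacunary_radius.
  assert (2 <= INR (lacunary_exp j)) by (apply (le_INR 2), lacunary_exp_ge_2).
  assert (0 < / (2 * INR (lacunary_exp j))) by (apply Rinv_0_lt_compat; lra).
  assert (/ (2 * INR (lacunary_exp j)) <= / 4) by (apply Rinv_le_contravar; lra).
  lra.
Qed.

Lemma lacunary_radius_pow_ge (j : nat) : 1 / 2 <= lacunary_radius j ^ lacunary_exp j.
Proof.
  unfold lacunary_radius.
  assert (2 <= INR (lacunary_exp j)) by (apply (le_INR 2), lacunary_exp_ge_2).
  assert (/ (2 * INR (lacunary_exp j)) <= / 4) by (apply Rinv_le_contravar; lra).
  pose proof (bernoulli_ineq (- / (2 * INR (lacunary_exp j))) (lacunary_exp j) ltac:(lra)) as Hb.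
  replace (1 + INR (lacunary_exp j) * - / (2 * INR (lacunary_exp j))) with (1 / 2) in Hb
    by (field; lra).
  replace (1 - / (2 * INR (lacunary_exp j))) with (1 + - / (2 * INR (lacunary_exp j))) by ring.
  exact Hb.
Qed.

Lemma lacunary_radius_mul_pow_le (j n : nat) :
  INR n * lacunary_radius j ^ n <= 2 * INR (lacunary_exp j).
Proof.
  pose proof (lacunary_radius_bounds j).
  assert (2 <= INR (lacunary_exp j)) by (apply (le_INR 2), lacunary_exp_ge_2).
  replace (2 * INR (lacunary_exp j)) with (/ (1 - lacunary_radius j))
    by (unfold lacunary_radius; field; lra).
  apply mul_pow_bound; lra.
Qed.

Lemma Cmod_mul_lacunary_dp_ge (j : nat) (z : C) : (4 <= j)%nat -> Cmod z = lacunary_radius j ->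
  lacunary_weight j / 4 <= Cmod (z * lacunary_dp z).
Proof.
  intros Hj Hz.
  pose proof (lacunary_radius_bounds j).
  assert (Hterm : forall k, Cmod (RtoC (lacunary_coef k) * INR (lacunary_exp k)
                                  * pow_n z (lacunary_exp k))
                            = lacunary_weight k * lacunary_radius j ^ lacunary_exp k).
  { intro k.
    rewrite !Cmod_mult, !Cmod_R, Cmod_pow_n, Hz, !Rabs_pos_eq;
      [reflexivity | apply pos_INR | apply Rlt_le, lacunary_coef_pos]. }
  pose proof (is_series_Cmod_ge_dominant _ _ _ _ j
                (is_series_mul_gap_series_deriv _ _ z lacunary_summable ltac:(lra))
                (is_series_half_geom (lacunary_weight j / 8))) as Hdom.
  cbv beta in Hdom; rewrite Hterm in Hdom.
  pose proof (lacunary_weight_pos j); pose proof (lacunary_radius_pow_ge j).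
  enough (lacunary_weight j / 2 - lacunary_weight j / 8 * 2 <= Cmod (z * lacunary_dp z)) by lra.
  eapply Rle_trans; [|apply Hdom].
  - apply Rplus_le_compat_r; nra.
  - pose proof (pow_le (1 / 2) j ltac:(lra)); nra.
  - intros k Hk; cbv beta; rewrite Hterm.
    destruct (Nat.lt_ge_cases k j) as [Hlt | Hge].
    + eapply Rle_trans; [|apply lacunary_weight_le_before; assumption].
      pose proof (lacunary_weight_pos k).
      assert (lacunary_radius j ^ lacunary_exp k <= 1)
        by (rewrite <- (pow1 (lacunary_exp k)); apply pow_incr; lra).
      nra.
    + eapply Rle_trans; [|apply (lacunary_coef_le_after j k); lia].
      unfold lacunary_weight; rewrite Rmult_assoc.
      apply Rmult_le_compat_l; [apply Rlt_le, lacunary_coef_pos | apply lacunary_radius_mul_pow_le].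
Qed.

Lemma lacunary_p_neq_0 (z : C) : Cmod z < 1 -> lacunary_p z <> RtoC 0.
Proof.
  intros Hz E.
  pose proof (Re_lacunary_p_ge z Hz) as Hre; rewrite E in Hre; simpl in Hre; lra.
Qed.

Lemma lacunary_log_deriv_ge (j : nat) (z : C) : (4 <= j)%nat -> Cmod z = lacunary_radius j ->
  lacunary_weight j / 8 <= Cmod (z * lacunary_dp z / lacunary_p z).
Proof.
  intros Hj Hz.
  pose proof (lacunary_radius_bounds j).
  assert (Hz1 : Cmod z < 1) by lra.
  pose proof (Cmod_mul_lacunary_dp_ge j z Hj Hz).
  pose proof (Cmod_lacunary_p_le z Hz1).
  pose proof (proj1 (Cmod_gt_0 _) (lacunary_p_neq_0 z Hz1)).
  pose proof (lacunary_weight_pos j).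
  rewrite Cmod_div by now apply lacunary_p_neq_0.
  apply Rmult_le_reg_r with (Cmod (lacunary_p z)); [lra|].
  unfold Rdiv at 2; rewrite Rmult_assoc, Rinv_l, Rmult_1_r by lra.
  nra.
Qed.


Lemma Cmod_polar (r t : R) : 0 <= r -> Cmod (polar r t) = r.
Proof.
  intro Hr; unfold polar, Cmod; simpl.
  replace ((r * cos t) * ((r * cos t) * 1) + (r * sin t) * ((r * sin t) * 1)) with (r ^ 2)
    by (pose proof (sin2_cos2 t); unfold Rsqr in *; nra).
  now apply sqrt_pow2.
Qed.

Lemma continuous_polar (r t : R) : continuous (polar r) t.
Proof.
  apply (continuous_comp_2 (fun t => r * cos t) (fun t => r * sin t) (fun a b => (a, b))).
  - apply (continuous_mult (K := R_AbsRing) (fun _ => r) cos);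
      [apply continuous_const | apply continuous_cos].
  - apply (continuous_mult (K := R_AbsRing) (fun _ => r) sin);
      [apply continuous_const | apply continuous_sin].
  - apply (continuous_ext (fun x => x)); [now intros [] | apply continuous_id].
Qed.

Lemma continuous_Cmod_polar (f : C -> C) (r t : R) : 0 <= r < 1 ->
  (forall z, Cmod z < 1 -> continuous f z) -> continuous (fun t => Cmod (f (polar r t))) t.
Proof.
  intros Hr Hf.
  apply (continuous_comp (fun t => f (polar r t)) Cmod).
  - apply (continuous_comp (polar r) f); [apply continuous_polar|].
    apply Hf; rewrite Cmod_polar; lra.
  - apply (filterlim_norm (K := C_AbsRing) (V := C_NormedModule)).
Qed.

Lemma I_int_ge (p dp : C -> C) (r M : R) : 0 <= r < 1 ->
  (forall z, Cmod z < 1 -> continuous p z) ->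
  (forall z, Cmod z < 1 -> continuous dp z) ->
  (forall z, Cmod z < 1 -> p z <> RtoC 0) ->
  0 <= M -> (forall z, Cmod z = r -> M <= Cmod (z * dp z / p z)) ->
  2 * PI * M ^ 2 <= I_int p dp r.
Proof.
  intros Hr Hp Hdp Hp0 HM0 HM.
  assert (Hint : forall t, Cmod (polar r t * dp (polar r t) / p (polar r t)) ^ 2
                           = (r * Cmod (dp (polar r t)) * / Cmod (p (polar r t))) ^ 2).
  { intro t; rewrite Cmod_div, Cmod_mult, Cmod_polar by (try apply Hp0; rewrite ?Cmod_polar; lra).
    reflexivity. }
  unfold I_int.
  replace (2 * PI * M ^ 2) with (RInt (fun _ => M ^ 2) 0 (2 * PI))
    by (rewrite RInt_const; change (@eq R ((2 * PI - 0) * M ^ 2) (2 * PI * M ^ 2)); ring).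
  pose proof PI_RGT_0.
  apply RInt_le; [lra | apply ex_RInt_const | |].
  - apply (ex_RInt_continuous (V := R_CompleteNormedModule)); intros t _.
    apply (continuous_ext (fun t => (r * Cmod (dp (polar r t)) * / Cmod (p (polar r t)))
                                    * ((r * Cmod (dp (polar r t)) * / Cmod (p (polar r t))) * 1)));
      [intro x; now rewrite Hint|].
    assert (Hc : continuous (fun t => r * Cmod (dp (polar r t)) * / Cmod (p (polar r t))) t).
    { apply (continuous_mult (K := R_AbsRing) (fun t => r * Cmod (dp (polar r t)))).
      - apply (continuous_mult (K := R_AbsRing) (fun _ => r)); [apply continuous_const|].
        now apply continuous_Cmod_polar.
      - apply continuous_Rinv_comp; [now apply continuous_Cmod_polar|].
        intro E; apply Cmod_eq_0 in E; revert E; apply Hp0; rewrite Cmod_polar; lra. }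
    apply (continuous_mult (K := R_AbsRing)); [exact Hc|].
    apply (continuous_mult (K := R_AbsRing)); [exact Hc | apply continuous_const].
  - intros t _; apply pow_incr; split; [exact HM0|].
    apply HM, Cmod_polar; lra.
Qed.

Lemma lacunary_I_int_ge (j : nat) : (4 <= j)%nat ->
  2 * PI * (lacunary_weight j / 8) ^ 2 <= I_int lacunary_p lacunary_dp (lacunary_radius j).
Proof.
  intro Hj; pose proof (lacunary_radius_bounds j).
  apply I_int_ge; [lra | | | | pose proof (lacunary_weight_pos j); lra |].
  - intros z Hz; exact (continuous_of_is_derive _ _ _ (is_derive_lacunary_p z Hz)).
  - intros z Hz; exact (continuous_gap_series_deriv _ _ z lacunary_summable Hz).
  - exact lacunary_p_neq_0.
  - intros z Hz; now apply lacunary_log_deriv_ge.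
Qed.

Lemma INR_cube_plus (j a : nat) : INR (j * j * j + a) = INR j ^ 3 + INR a.
Proof. rewrite plus_INR, !mult_INR; ring. Qed.

Lemma lacunary_weight_div_8 (j : nat) :
  lacunary_weight j / 8 = Rpower 2 (INR j ^ 3 - INR j ^ 2 - 4).
Proof.
  rewrite lacunary_weight_eq.
  replace (INR j ^ 3 - INR j ^ 2 - 4) with (INR (j * j * j + 1) + - INR (j * j + 2 + 3))
    by (rewrite INR_cube_plus, !plus_INR, mult_INR; simpl; ring).
  rewrite Rpower_plus, Rpower_Ropp, !Rpower_pow by lra.
  rewrite !pow_add; field; apply pow_nonzero; lra.
Qed.

Lemma one_sub_lacunary_radius_Rpower (j : nat) (beta : R) :
  Rpower (1 - lacunary_radius j) (- beta) = Rpower 2 (beta * (INR j ^ 3 + 2)).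
Proof.
  unfold lacunary_radius; rewrite INR_lacunary_exp.
  replace (1 - (1 - / (2 * 2 ^ (j * j * j + 1)))) with (Rpower 2 (- (INR j ^ 3 + 2))).
  - rewrite Rpower_mult; f_equal; ring.
  - replace (INR j ^ 3 + 2) with (INR (j * j * j + 2)) by (rewrite INR_cube_plus; simpl; ring).
    rewrite Rpower_Ropp, Rpower_pow by lra.
    rewrite Nat.add_succ_r; simpl pow; field; apply pow_nonzero; lra.
Qed.

Lemma lacunary_radius_gt (j : nat) (r0 : R) : r0 < 1 -> / (1 - r0) <= INR j ->
  r0 < lacunary_radius j.
Proof.
  intros Hr0 Hj; unfold lacunary_radius.
  assert (Hlt : INR j < 2 * INR (lacunary_exp j)).
  { rewrite INR_lacunary_exp.
    replace (2 * 2 ^ (j * j * j + 1)) with (INR (2 ^ (j * j * j + 2)))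
      by (rewrite pow_INR, !pow_add; replace (INR 2) with 2 by (simpl; ring); ring).
    apply lt_INR.
    apply (Nat.le_lt_trans _ (j * j * j + 2)); [nia | apply Nat.pow_gt_lin_r; lia]. }
  assert (0 < / (1 - r0)) by (apply Rinv_0_lt_compat; lra).
  assert (Hinv : / (2 * INR (lacunary_exp j)) < / / (1 - r0)) by (apply Rinv_lt_contravar; nra).
  rewrite Rinv_inv in Hinv; lra.
Qed.

Lemma Rpower_2_gap_dominates (beta K : R) (j : nat) :
  beta < 2 -> 4 <= INR j -> 4 <= (2 - beta) * INR j -> K <= INR j ->
  K * Rpower 2 (beta * (INR j ^ 3 + 2)) < Rpower 2 (INR j ^ 3 - INR j ^ 2 - 4) ^ 2.
Proof.
  intros Hbeta Hj4 Hjb HK.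
  set (X := INR j) in *.
  rewrite <- (Rpower_pow 2 (Rpower 2 _)), Rpower_mult by apply exp_pos.
  assert (Hexp : beta * (X ^ 3 + 2) + X <= (X ^ 3 - X ^ 2 - 4) * INR 2).
  { assert ((2 - beta) * X ^ 3 >= 4 * X ^ 2).
    { replace ((2 - beta) * X ^ 3) with ((2 - beta) * X * X ^ 2) by ring.
      assert (0 <= X ^ 2) by apply pow2_ge_0. nra. }
    simpl; nra. }
  apply Rlt_le_trans with (Rpower 2 (beta * (X ^ 3 + 2) + X));
    [|apply Rle_Rpower; [lra | exact Hexp]].
  rewrite Rpower_plus, Rmult_comm.
  apply Rmult_lt_compat_l; [apply exp_pos|].
  unfold X; rewrite Rpower_pow by lra.
  replace (2 ^ j) with (INR (2 ^ j)) by (rewrite pow_INR; f_equal; simpl; ring).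
  apply Rle_lt_trans with (INR j); [exact HK|].
  apply lt_INR, Nat.pow_gt_lin_r; lia.
Qed.

Theorem theorem1p2 :
  exists p dp : C -> C,
    holo_on_disc_with p dp /\
    (forall z : C, in_disc z -> 0 < Re (p z)) /\
    forall beta : R, beta < 2 ->
      ~ bigO_at_1minus (I_int p dp) (fun r => Rpower (1 - r) (- beta)).
Proof.
  exists lacunary_p, lacunary_dp; split; [|split].
  - intros z Hz; exact (is_derive_lacunary_p z Hz).
  - intros z Hz; pose proof (Re_lacunary_p_ge z Hz); lra.
  - intros beta Hbeta [K [r0 [Hr0 HK]]].
    destruct (INR_unbounded (Rmax (Rmax 4 (4 / (2 - beta))) (Rmax K (/ (1 - r0))))) as [j Hj].
    apply Rmax_Rlt in Hj as [Hj1 Hj2].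
    apply Rmax_Rlt in Hj1 as [Hj4 Hjbeta]; apply Rmax_Rlt in Hj2 as [HjK Hjr0].
    assert (Hj : (4 <= j)%nat) by (apply INR_le; simpl; lra).
    assert (Hjb : 4 <= (2 - beta) * INR j).
    { apply Rmult_lt_compat_l with (r := 2 - beta) in Hjbeta; [|lra].
      replace ((2 - beta) * (4 / (2 - beta))) with 4 in Hjbeta by (field; lra). lra. }
    pose proof (lacunary_radius_bounds j) as Hr.
    specialize (HK (lacunary_radius j)
                  (conj (lacunary_radius_gt j r0 Hr0 ltac:(lra)) (proj2 Hr))).
    rewrite one_sub_lacunary_radius_Rpower in HK.
    pose proof (lacunary_I_int_ge j Hj) as HI; rewrite lacunary_weight_div_8 in HI.
    pose proof (Rpower_2_gap_dominates beta K j Hbeta ltac:(lra) Hjb ltac:(lra)).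
    pose proof (pow2_ge_0 (Rpower 2 (INR j ^ 3 - INR j ^ 2 - 4))).
    assert (1 <= 2 * PI) by (pose proof PI_RGT_0; pose proof PI2_1; lra).
    nra.
Qed.
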